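(* Let $n$ be a positive integer and let $a_1,a_2,\ldots,a_n$ be strictly positive real numbers. Let $A_R(n)=[A_R(i,j)]_{i,j=1}^n$ be the matrix with $A_R(i,j)=1$ if $j=1$ and $i\neq 1$; $A_R(i,j)=a_i$ if $i\mid j$; and $A_R(i,j)=0$ otherwise. Then \[ \det(A_R(n))=\left(\prod_{j=1}^n a_j\right)\left[1+\sum_{k=2}^{n}\frac{\mu(k)}{a_k}\right]. \]
   Context: $\mu$ denotes the Möbius function: $\mu(1)=1$, $\mu(j)=0$ if $j$ has a repeated prime factor, and $\mu(j)=(-1)^k$ if $j$ is a product of $k$ distinct primes. *)

From HB Require Import structures.
From mathcomp Require Import all_boot all_order all_algebra.
Set Implicit Arguments. Unset Strict Implicit. Unset Printing Implicit Defensive.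
Import Order.TTheory GRing.Theory Num.Theory.

Definition mobius (k : nat) : int :=
  if (0 < k)%N && all (fun p => logn p k == 1%N) (primes k)
  then ((-1) ^+ size (primes k))%R else 0%R.

Local Open Scope ring_scope.

(* A_R(n), with 1-based indices: the entry (i,j) of the paper is the entry
   (i-1, j-1) of this matrix, i.e. row index i : 'I_n stands for i.+1. *)
Definition A_R (R : nzRingType) (n : nat) (a : nat -> R) : 'M[R]_n :=
  \matrix_(i < n, j < n)
    if (j.+1 == 1)%N && (i.+1 != 1)%N then 1
    else if (i.+1 %| j.+1)%N then a i.+1 else 0.

(* Add to the first row the combination sum_(k >= 2) (a_1 mu(k) / a_k) R_k of
   the other rows.  In a column j >= 2, row k contributes a_k [k | j], so the
   new entry is a_1 sum_(d | j) mu(d) = 0, while the first column becomes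
   a_1 (1 + sum_(k >= 2) mu(k) / a_k).  Expanding along the first row leaves
   the minor [a_i [i | j]]_(i, j >= 2), which is upper triangular with
   diagonal a_2, ..., a_n. *)

From mathcomp Require Import all_boot all_order all_algebra.
Set Implicit Arguments.
Unset Strict Implicit.
Unset Printing Implicit Defensive.
Import Order.TTheory GRing.Theory Num.Theory.

Lemma mobiusM_prime_dvd p e : prime p -> (p %| e)%N -> mobius (p * e) = 0%R.
Proof.
move=> p_pr p_dvd_e; rewrite /mobius; case: ifP => // /andP[pe_gt0 /allP sqfree].
have p_gt0 := prime_gt0 p_pr.
have e_gt0 : (0 < e)%N by move: pe_gt0; rewrite muln_gt0 => /andP[].
have /sqfree : p \in primes (p * e) by rewrite mem_primes p_pr pe_gt0 dvdn_mulr.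
rewrite lognM // logn_prime // eqxx /= eqSS.
by rewrite eqn0Ngt -(pfactor_dvdn 1) // expn1 p_dvd_e.
Qed.

Lemma mobiusM_prime p e : prime p -> ~~ (p %| e)%N -> mobius (p * e) = (- mobius e)%R.
Proof.
move=> p_pr p_ndvd_e; have p_gt0 := prime_gt0 p_pr.
have e_gt0 : (0 < e)%N by case: e p_ndvd_e; rewrite ?dvdn0.
have p_nprimes : p \notin primes e by rewrite mem_primes p_pr e_gt0 (negPf p_ndvd_e) andbF.
have primes_pe : perm_eq (primes (p * e)) (p :: primes e).
  apply: uniq_perm; rewrite /= ?p_nprimes ?primes_uniq // => q.
  by rewrite primesM // primes_prime // !inE.
rewrite /mobius (perm_all _ primes_pe) (perm_size primes_pe) /= muln_gt0 p_gt0 e_gt0 /=.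
rewrite lognM // logn_prime // eqxx (lognE p e) (negPf p_ndvd_e) !andbF /=.
rewrite (@eq_in_all _ _ (fun q => logn q e == 1%N)) => [|q q_e]; last first.
  have q_neq_p : q != p by apply: contraNneq p_nprimes => <-.
  by rewrite lognM // logn_prime // (negPf q_neq_p).
by case: ifP => _; rewrite ?oppr0 // exprS mulN1r.
Qed.

Lemma divisors_mul_dvd p m : (0 < p)%N -> (0 < m)%N ->
  perm_eq [seq d <- divisors (p * m) | (p %| d)%N] [seq (p * e)%N | e <- divisors m].
Proof.
move=> p_gt0 m_gt0; have pm_gt0 : (0 < p * m)%N by rewrite muln_gt0 p_gt0.
have mulpI : injective (muln p) by move=> x y /eqP; rewrite eqn_pmul2l // => /eqP.
apply: uniq_perm; first by rewrite filter_uniq ?divisors_uniq.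
  by rewrite (map_inj_uniq mulpI) divisors_uniq.
move=> d; rewrite mem_filter -dvdn_divisors //; apply/andP/mapP => [[/dvdnP[e ->]]|[e]].
  by rewrite mulnC dvdn_pmul2l // dvdn_divisors // => e_m; exists e; rewrite // mulnC.
by rewrite -dvdn_divisors // => e_m ->; rewrite dvdn_mulr // dvdn_pmul2l.
Qed.

Lemma divisors_mul_prime_ndvd p m : prime p -> (0 < m)%N ->
  perm_eq [seq d <- divisors (p * m) | ~~ (p %| d)%N] [seq d <- divisors m | ~~ (p %| d)%N].
Proof.
move=> p_pr m_gt0; have pm_gt0 : (0 < p * m)%N by rewrite muln_gt0 prime_gt0.
apply: uniq_perm; rewrite ?filter_uniq ?divisors_uniq // => d.
rewrite !mem_filter -!dvdn_divisors //; apply: andb_id2l => p_ndvd_d.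
by rewrite Gauss_dvdr // coprime_sym prime_coprime.
Qed.

Lemma sum_mobius_divisors n : (0 < n)%N ->
  (\sum_(d <- divisors n) mobius d = (n == 1)%:R)%R.
Proof.
case: n => [//|[|n] _].
  have -> : divisors 1 = [:: 1%N] by [].
  by rewrite big_seq1 eqxx.
rewrite eqSS /=.
have [p p_pr /dvdnP[m n_eq]] : exists2 p, prime p & (p %| n.+2)%N.
  by exists (pdiv n.+2); [apply: pdiv_prime | apply: pdiv_dvd].
have m_gt0 : (0 < m)%N by case: m n_eq.
rewrite n_eq mulnC (bigID (dvdn p)) /= -!(big_filter (divisors _)).
rewrite (perm_big _ (divisors_mul_dvd (prime_gt0 p_pr) m_gt0)) big_map.
rewrite (perm_big _ (divisors_mul_prime_ndvd p_pr m_gt0)) (bigID (dvdn p)) /=.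
rewrite big1 => [|e /(mobiusM_prime_dvd p_pr)//]; rewrite add0r.
under eq_bigr => e /(mobiusM_prime p_pr) -> do [].
by rewrite sumrN big_filter addNr.
Qed.

Lemma sum_mobius_dvd N n : (0 < n <= N)%N ->
  (\sum_(d < N.+1 | (d %| n)%N) mobius d = (n == 1)%:R)%R.
Proof.
case/andP=> n_gt0 n_le_N; rewrite -(sum_mobius_divisors n_gt0).
rewrite -(big_mkord (dvdn^~ n)) -big_filter.
apply: perm_big; apply: uniq_perm; rewrite ?filter_uniq ?iota_uniq ?divisors_uniq // => d.
rewrite mem_filter mem_index_iota -dvdn_divisors //; apply: andb_idr => d_dvd_n.
by rewrite ltnS (leq_trans (dvdn_leq n_gt0 d_dvd_n)).
Qed.

Local Open Scope ring_scope.

Section DetRowOperations.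

Variable R : comNzRingType.

Lemma det_triu n (A : 'M[R]_n) :
  (forall i j : 'I_n, (j < i)%N -> A i j = 0) -> \det A = \prod_i A i i.
Proof.
move=> A_triu; rewrite -det_tr det_trig; last by apply/is_trig_mxP => i j ij; rewrite mxE A_triu.
by apply: eq_bigr => i _; rewrite mxE.
Qed.

Lemma det_add_comb_row0 m (A : 'M[R]_m.+1) (c : 'I_m -> R) :
  \det (\matrix_(i, j) (A i j + (i == ord0)%:R * \sum_k c k * A (lift ord0 k) j)) = \det A.
Proof.
pose N : 'M[R]_m.+1 := \matrix_(i, k) ((i == ord0)%:R * oapp c 0 (unlift ord0 k)).
have -> : \matrix_(i, j) (A i j + (i == ord0)%:R * \sum_k c k * A (lift ord0 k) j)
          = (1%:M + N) *m A.
  apply/matrixP => i j; rewrite mulmxDl mul1mx !mxE big_ord_recl /N !mxE.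
  rewrite unlift_none mulr0 mul0r add0r mulr_sumr; congr (_ + _).
  by apply: eq_bigr => k _; rewrite mxE liftK mulrA.
have det_E : \det (1%:M + N) = 1.
  rewrite det_triu => [|i j ji]; last first.
    have i_neq0 : i != ord0 by apply: contraTneq ji => ->.
    by rewrite !mxE (negPf i_neq0) mul0r addr0 -val_eqE gtn_eqF.
  apply: big1 => i _; rewrite !mxE eqxx.
  by case: eqP => [->|_]; rewrite ?unlift_none ?mulr0 ?mul0r addr0.
by rewrite det_mulmx det_E mul1r.
Qed.

Lemma expand_det_row0_pivot m (A : 'M[R]_m.+1) :
  (forall j, A ord0 (lift ord0 j) = 0) ->
  \det A = A ord0 ord0 * \det (row' ord0 (col' ord0 A)).
Proof.
move=> A0; rewrite (expand_det_row _ ord0) big_ord_recl big1 => [|j _]; last first.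
  by rewrite A0 mul0r.
by rewrite addr0 /cofactor addn0 expr0 mul1r.
Qed.

End DetRowOperations.

Section DetAR.

Variables (F : fieldType) (m : nat) (a : nat -> F).
Hypothesis a_neq0 : forall k, (2 <= k <= m.+1)%N -> a k != 0.

Let c (k : 'I_m) := a 1 * (mobius k.+2)%:~R / a k.+2.
Let A := A_R m.+1 a.
Let B := \matrix_(i, j) (A i j + (i == ord0)%:R * \sum_k c k * A (lift ord0 k) j).

Lemma A_R_reduced_row0 (j : 'I_m) : B ord0 (lift ord0 j) = 0.
Proof.
have mobius_sum : \sum_(k < m | (k.+2 %| j.+2)%N) mobius k.+2 = -1.
  have := @sum_mobius_dvd m.+1 j.+2; rewrite !ltnS ltn_ord big_mkcond !big_ord_recl.
  rewrite !lift0 /= add0r dvd1n -big_mkcond => /(_ isT) /eqP.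
  by rewrite addrC addr_eq0 => /eqP.
rewrite !mxE /= mul1r dvd1n.
have -> : \sum_(k < m) c k * A (lift ord0 k) (lift ord0 j)
          = a 1 * (\sum_(k < m | (k.+2 %| j.+2)%N) mobius k.+2)%:~R.
  rewrite rmorph_sum mulr_sumr [RHS]big_mkcond; apply: eq_bigr => k _.
  rewrite /A !mxE !lift0 /=; case: ifP => _; last by rewrite mulr0.
  by rewrite /c divfK // a_neq0 //= ltnS ltn_ord.
by rewrite mobius_sum rmorphN1 mulrN1 subrr.
Qed.

Lemma A_R_reduced_corner :
  B ord0 ord0 = a 1 * (1 + \sum_(k < m) (mobius k.+2)%:~R / a k.+2).
Proof.
rewrite !mxE /= mul1r mulrDr mulr1 mulr_sumr; congr (_ + _).
by apply: eq_bigr => k _; rewrite /A !mxE /= mulr1 mulrA.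
Qed.

Lemma det_A_R_reduced_minor : \det (row' ord0 (col' ord0 B)) = \prod_(i < m) a i.+2.
Proof.
rewrite det_triu => [|i j ji]; last first.
  by rewrite !mxE !lift0 /= mul0r addr0 gtnNdvd.
by apply: eq_bigr => i _; rewrite !mxE !lift0 /= mul0r addr0 dvdnn.
Qed.

Lemma det_A_R : \det (A_R m.+1 a)
  = (\prod_(1 <= j < m.+2) a j) * (1 + \sum_(2 <= k < m.+2) (mobius k)%:~R / a k).
Proof.
rewrite -(det_add_comb_row0 _ c) (expand_det_row0_pivot A_R_reduced_row0).
rewrite A_R_reduced_corner det_A_R_reduced_minor.
rewrite big_ltn // !(big_add1 _ _ 1) !(big_add1 _ _ 0) /= !big_mkord.
by rewrite mulrAC.
Qed.

End DetAR.

Theorem theorem6 (R : realFieldType) (n : nat) (a : nat -> R)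
  (hn : (0 < n)%N) (ha : forall i, (1 <= i <= n)%N -> 0 < a i) :
  \det (A_R n a) =
    (\prod_(1 <= j < n.+1) a j) * (1 + \sum_(2 <= k < n.+1) (mobius k)%:~R / a k).
Proof.
case: n hn ha => // m _ a_gt0; apply: det_A_R => k /andP[k_gt1 k_le].
by rewrite gt_eqF // a_gt0 // k_le ltnW.
Qed.
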